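(* Let $\mathbb{P}: M_2 \to M_2$ be the linear map $$\mathbb{P}\begin{pmatrix} x_{11} & x_{12} \\ x_{21} & x_{22}\end{pmatrix} = \begin{pmatrix} \frac{x_{11}+x_{22}}{2} & x_{12} \\ x_{21} & \frac{x_{11}+x_{22}}{2}\end{pmatrix},$$ and let $\mathbb{I}$ denote the identity map on $M_2$. Then the minimum eigenvalue of $(\mathbb{I}_A\otimes\mathbb{P}_B)(\sigma_{AB})$, minimized over all two-qubit density matrices $\sigma_{AB}$ on $\mathbb{C}^2\otimes\mathbb{C}^2$, equals $-\frac14$, and this minimum is attained for a maximally entangled state, e.g. $\frac{1}{\sqrt2}(|00\rangle+|11\rangle)$.
   Context: $M_2$ denotes the space of complex $2\times 2$ matrices; $\mathbb{I}_A\otimes\mathbb{P}_B$ denotes the map acting as the identity on the first qubit and as $\mathbb{P}$ on the second qubit. A two-qubit density matrix is a positive semidefinite trace-one operator on $\mathbb{C}^2\otimes\mathbb{C}^2$. *)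

From HB Require Import structures.
From mathcomp Require Import all_boot all_order all_algebra all_field.
Set Implicit Arguments. Unset Strict Implicit. Unset Printing Implicit Defensive.
Import Order.TTheory GRing.Theory Num.Theory Num.Def.
Local Open Scope ring_scope.

(* Two-qubit operators are 4x4 matrices indexed by
   'I_4, with the standard Kronecker convention |a b> = e_(2a+b),
   i.e. the first qubit (A) is the most significant index. *)

Definition adj (m n : nat) (M : 'M[algC]_(m, n)) : 'M[algC]_(n, m) :=
  map_mx conjC M^T.

Definition Pmap (X : 'M[algC]_2) : 'M[algC]_2 :=
  \matrix_(i < 2, j < 2)
    (if i == j then (X 0 0 + X 1 1) / 2%:R else X i j).

Definition tidx (a b : 'I_2) : 'I_4 := inord (2 * a + b).
Definition hiA (i : 'I_4) : 'I_2 := inord (i %/ 2).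
Definition loB (i : 'I_4) : 'I_2 := inord (i %% 2).

Definition blockB (S : 'M[algC]_4) (a a' : 'I_2) : 'M[algC]_2 :=
  \matrix_(b < 2, b' < 2) S (tidx a b) (tidx a' b').

(* (I_A ⊗ P_B)(S) : apply P to each block *)
Definition IP (S : 'M[algC]_4) : 'M[algC]_4 :=
  \matrix_(i < 4, j < 4) Pmap (blockB S (hiA i) (hiA j)) (loB i) (loB j).

Definition density_matrix (S : 'M[algC]_4) : Prop :=
  [/\ adj S = S,
      (forall v : 'cV[algC]_4, 0 <= (adj v *m S *m v) 0 0)
    & \tr S = 1].

Definition phi_plus : 'cV[algC]_4 :=
  \col_i (if (i == tidx 0 0) || (i == tidx 1 1) then (sqrtC 2%:R)^-1 else 0).
Definition rho_plus : 'M[algC]_4 := phi_plus *m adj phi_plus.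

(* (I ⊗ P) is linear and, by the spectral theorem, every density matrix is a
   convex combination of pure states, so it suffices to show
   4 <u|(I ⊗ P)(|c><c|)|u> + |u|^2 |c|^2 >= 0 for all vectors u and c.
   Contracting u and c over qubit A yields the 2x2 matrix G := overlap u c;
   the left-hand side equals 2 |G|^2 + 8 Re (G00 conj G11) + |u|^2 |c|^2.
   Cauchy-Schwarz gives |G00| + |G11| <= |u| |c|, so it is at least
   3 (|G00| - |G11|)^2 >= 0.
   For an eigenvector u of eigenvalue a this reads (4a + 1) |u|^2 >= 0.  At the
   state Φ+ the bound is attained by the eigenvector |00> - |11>. *)

From HB Require Import structures.
From mathcomp Require Import all_boot all_order all_algebra all_field.
From mathcomp Require Import ring.
Set Implicit Arguments. Unset Strict Implicit. Unset Printing Implicit Defensive.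
Import Order.TTheory GRing.Theory Num.Theory.
Local Open Scope ring_scope.

Lemma big_ord2 (R : nmodType) (F : 'I_2 -> R) : \sum_(i < 2) F i = F 0 + F 1.
Proof. by rewrite big_ord_recl big_ord1; congr (F _ + F _); apply/val_inj. Qed.

Lemma CauchySchwarz_norm_sum (C : numClosedFieldType) n (x y : 'I_n -> C) :
  (\sum_i `|x i| * `|y i|) ^+ 2 <= (\sum_i `|x i| ^+ 2) * (\sum_i `|y i| ^+ 2).
Proof.
pose nrow (z : 'I_n -> C) := \row_i `|z i|.
have dotE a b : dotmx (nrow a) (nrow b) = \sum_i `|a i| * `|b i|.
  by rewrite dotmxE mxE; apply: eq_bigr => i _; rewrite !mxE geC0_conj.
have normE a : dotmx (nrow a) (nrow a) = \sum_i `|a i| ^+ 2.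
  by rewrite dotE; apply: eq_bigr => i _; rewrite expr2.
have CS : `|dotmx (nrow x) (nrow y)| ^+ 2 <=
          dotmx (nrow x) (nrow x) * dotmx (nrow y) (nrow y).
  exact: (CauchySchwarz (@dotmx C n) _ _).1.
move: CS; rewrite !normE dotE ger0_norm //.
by apply: sumr_ge0 => i _; rewrite mulr_ge0.
Qed.

Lemma cross_conj_ge (C : numClosedFieldType) (x y : C) :
  - (2%:R * `|x| * `|y|) <= x * y^* + y * x^*.
Proof.
have -> : x * y^* + y * x^* = `|x + y| ^+ 2 - `|x| ^+ 2 - `|y| ^+ 2.
  by rewrite !normCK rmorphD /=; ring.
have -> : - (2%:R * `|x| * `|y|) = (`|x| - `|y|) ^+ 2 - `|x| ^+ 2 - `|y| ^+ 2.
  by ring.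
rewrite !lerD2r -real_normK ?rpredB ?normr_real //.
by rewrite lerXn2r ?nnegrE ?ler_dist_normD.
Qed.

Lemma cross_form_ge0 (C : numClosedFieldType) (x y t : C) :
  (`|x| + `|y|) ^+ 2 <= t ->
  0 <= 2%:R * (`|x| ^+ 2 + `|y| ^+ 2) + 4%:R * (x * y^* + y * x^*) + t.
Proof.
move=> le_t; apply: le_trans (_ : 0 <= 3%:R * (`|x| - `|y|) ^+ 2) _.
  by rewrite mulr_ge0 ?ler0n // real_exprn_even_ge0 ?rpredB ?normr_real.
have -> : 3%:R * (`|x| - `|y|) ^+ 2 = 2%:R * (`|x| ^+ 2 + `|y| ^+ 2)
    + 4%:R * - (2%:R * `|x| * `|y|) + (`|x| + `|y|) ^+ 2 by ring.
by rewrite lerD // lerD2l ler_wpM2l ?ler0n ?cross_conj_ge.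
Qed.

Lemma adjK m n (M : 'M[algC]_(m, n)) : adj (adj M) = M.
Proof. exact: trmxCK. Qed.

Lemma adjM m n p (A : 'M[algC]_(m, n)) (B : 'M[algC]_(n, p)) :
  adj (A *m B) = adj B *m adj A.
Proof. by rewrite /adj trmx_mul map_mxM. Qed.

Lemma row_mul_adj n (u : 'rV[algC]_n) : (u *m adj u) 0 0 = \sum_i `|u 0 i| ^+ 2.
Proof. by rewrite mxE; apply: eq_bigr => i _; rewrite !mxE normCK. Qed.

Lemma trace_col_mul_adj n (c : 'cV[algC]_n) :
  \tr (c *m adj c) = \sum_i `|c i 0| ^+ 2.
Proof. by apply: eq_bigr => i _; rewrite !mxE big_ord1 !mxE normCK. Qed.

Lemma row_mul_adj_gt0 n (u : 'rV[algC]_n) : u != 0 -> 0 < (u *m adj u) 0 0.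
Proof. by move=> nz; rewrite -dotmxE dnorm_gt0. Qed.

Lemma adj_delta m n (i : 'I_m) (j : 'I_n) : adj (delta_mx i j) = delta_mx j i.
Proof. by rewrite /adj trmx_delta map_delta_mx. Qed.

Lemma psd_sum_rank1 n (S : 'M[algC]_n) :
  adj S = S -> (forall v : 'cV[algC]_n, 0 <= (adj v *m S *m v) 0 0) ->
  exists (d : 'I_n -> algC) (c : 'I_n -> 'cV[algC]_n),
    (forall k, 0 <= d k) /\ S = \sum_k d k *: (c k *m adj (c k)).
Proof.
move=> S_herm S_psd.
have /orthomx_spectralP S_diag : S \is normalmx.
  by apply/normalmxP; rewrite -[(S ^t*)%sesqui]/(adj S) S_herm.
set U := spectralmx S in S_diag; set D := spectral_diag S in S_diag.
have U_unitary : U \is unitarymx by apply: spectral_unitarymx.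
rewrite (invmx_unitary U_unitary) -[(U ^t*)%sesqui]/(adj U) in S_diag.
have UU : U *m adj U = 1%:M by apply/unitarymxP.
exists (fun k => D 0 k), (fun k => adj (row k U)); split.
  move=> k; have e_k : row k U *m adj U = delta_mx 0 k.
    by rewrite -row_mul UU row1.
  have := S_psd (adj (row k U)).
  rewrite adjK S_diag !mulmxA e_k -mulmxA -[U *m _]adjK adjM adjK e_k adj_delta.
  by rewrite -rowE -colE row_diag_mx !mxE !eqxx mulr1.
rewrite {1}S_diag mul_mx_diag; apply/matrixP => i j; rewrite summxE !mxE.
by apply: eq_bigr => k _; rewrite adjK !mxE big_ord1 !mxE; ring.
Qed.

Lemma hiA_tidx a b : hiA (tidx a b) = a.
Proof.
by case: a => [[|[|//]] ?]; case: b => [[|[|//]] ?];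
  apply/val_inj; rewrite /= !inordK.
Qed.

Lemma loB_tidx a b : loB (tidx a b) = b.
Proof.
by case: a => [[|[|//]] ?]; case: b => [[|[|//]] ?];
  apply/val_inj; rewrite /= !inordK.
Qed.

Lemma tidx_split i : tidx (hiA i) (loB i) = i.
Proof. by case: i => [[|[|[|[|]]]] ?] //; apply/val_inj; rewrite /= !inordK. Qed.

Lemma eq_tidx a b a' b' : (tidx a b == tidx a' b') = (a == a') && (b == b').
Proof.
apply/eqP/andP => [eq_ab | [/eqP-> /eqP->] //].
by split; apply/eqP; [move/(congr1 hiA): eq_ab | move/(congr1 loB): eq_ab];
  rewrite ?hiA_tidx ?loB_tidx.
Qed.

Lemma big_tidx (R : nmodType) (F : 'I_4 -> R) :
  \sum_(i < 4) F i = \sum_(a < 2) \sum_(b < 2) F (tidx a b).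
Proof.
rewrite pair_big /= (reindex (fun p : 'I_2 * 'I_2 => tidx p.1 p.2)) //=.
by exists (fun i => (hiA i, loB i)) => [[a b] _ | i _];
  rewrite ?hiA_tidx ?loB_tidx ?tidx_split.
Qed.

Lemma IP_is_linear : linear IP.
Proof.
move=> z S T; apply/matrixP => i j; rewrite !mxE.
by case: eqP => _ //; field.
Qed.

HB.instance Definition _ :=
  GRing.isLinear.Build algC 'M[algC]_4 'M[algC]_4 _ IP IP_is_linear.

Definition overlap (u : 'rV[algC]_4) (c : 'cV[algC]_4) (b b' : 'I_2) : algC :=
  \sum_(a < 2) u 0 (tidx a b) * c (tidx a b') 0.

Lemma quad_IP_rank1 u c :
  4%:R * (u *m IP (c *m adj c) *m adj u) 0 0 =
  2%:R * \sum_(b < 2) \sum_(b' < 2) `|overlap u c b b'| ^+ 2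
  + 4%:R * (overlap u c 0 0 * (overlap u c 1 1)^*
            + overlap u c 1 1 * (overlap u c 0 0)^*).
Proof.
rewrite /overlap !mxE big_tidx.
under eq_bigr do under eq_bigr do rewrite !mxE big_tidx.
do ! rewrite ?big_ord2 ?hiA_tidx ?loB_tidx ?normCK ?mxE ?big_ord1 /=.
by rewrite !(rmorphD, rmorphM) /=; field.
Qed.

Lemma overlap_diag_le u c :
  (`|overlap u c 0 0| + `|overlap u c 1 1|) ^+ 2 <=
  (u *m adj u) 0 0 * \tr (c *m adj c).
Proof.
have le_diag b :
    `|overlap u c b b| <= \sum_(a < 2) `|u 0 (tidx a b)| * `|c (tidx a b) 0|.
  by apply: le_trans (ler_norm_sum _ _ _) _; under eq_bigr do rewrite normrM.
rewrite row_mul_adj trace_col_mul_adj.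
apply: le_trans _ (CauchySchwarz_norm_sum (fun i => u 0 i) (fun i => c i 0)).
rewrite lerXn2r ?nnegrE ?addr_ge0 //.
  by apply: sumr_ge0 => i _; rewrite mulr_ge0.
by rewrite big_tidx exchange_big big_ord2 lerD.
Qed.

Lemma IP_rank1_ge (u : 'rV[algC]_4) (c : 'cV[algC]_4) :
  0 <= 4%:R * (u *m IP (c *m adj c) *m adj u) 0 0
       + (u *m adj u) 0 0 * \tr (c *m adj c).
Proof.
have diag_ge0 := cross_form_ge0 (overlap_diag_le u c).
rewrite quad_IP_rank1 !big_ord2; set o := overlap u c in diag_ge0 *.
set t := (u *m adj u) 0 0 * \tr (c *m adj c) in diag_ge0 *.
have -> : 2%:R * (`|o 0 0| ^+ 2 + `|o 0 1| ^+ 2 + (`|o 1 0| ^+ 2 + `|o 1 1| ^+ 2))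
    + 4%:R * (o 0 0 * (o 1 1)^* + o 1 1 * (o 0 0)^*) + t
  = 2%:R * (`|o 0 0| ^+ 2 + `|o 1 1| ^+ 2)
    + 4%:R * (o 0 0 * (o 1 1)^* + o 1 1 * (o 0 0)^*) + t
    + 2%:R * (`|o 0 1| ^+ 2 + `|o 1 0| ^+ 2) by ring.
by rewrite addr_ge0 // mulr_ge0 ?ler0n ?addr_ge0 ?exprn_ge0.
Qed.

Lemma IP_quad_ge S (u : 'rV[algC]_4) : density_matrix S ->
  0 <= 4%:R * (u *m IP S *m adj u) 0 0 + (u *m adj u) 0 0.
Proof.
case=> S_herm S_psd trS1.
have -> : (u *m adj u) 0 0 = (u *m adj u) 0 0 * \tr S by rewrite trS1 mulr1.
have [d [c [d_ge0 ->]]] := psd_sum_rank1 S_herm S_psd.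
rewrite linear_sum mulmx_sumr mulmx_suml summxE raddf_sum /=.
rewrite !mulr_sumr -big_split /=; apply: sumr_ge0 => k _.
rewrite linearZ /= -scalemxAr -scalemxAl mxE mxtraceZ mulrCA (mulrCA _ (d k)).
by rewrite -mulrDr mulr_ge0 ?IP_rank1_ge.
Qed.

Lemma IP_eigenvalue_ge S a : density_matrix S -> eigenvalue (IP S) a ->
  - 4%:R^-1 <= a.
Proof.
move=> S_density /eigenvalueP [v v_eigen v_nz].
have := IP_quad_ge v S_density.
rewrite v_eigen -scalemxAl mxE mulrA -{2}[(v *m adj v) 0 0]mul1r -mulrDl.
rewrite pmulr_lge0 ?row_mul_adj_gt0 // => ge0_4a1.
rewrite -subr_ge0 opprK (_ : a + _ = (4%:R * a + 1) / 4%:R); last by field.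
by rewrite divr_ge0 ?ler0n.
Qed.

Lemma phi_plus_tidx a b :
  phi_plus (tidx a b) 0 = if a == b then (sqrtC 2%:R)^-1 else 0.
Proof.
by rewrite mxE !eq_tidx; case: a => [[|[|//]] ?]; case: b => [[|[|//]] ?].
Qed.

Lemma rank1_density (c : 'cV[algC]_4) :
  \tr (c *m adj c) = 1 -> density_matrix (c *m adj c).
Proof.
move=> tr1; split=> //; first by rewrite adjM adjK.
move=> v; rewrite mulmxA -mulmxA -[adj c *m v]adjK adjM adjK row_mul_adj.
by apply: sumr_ge0 => i _; apply: exprn_ge0.
Qed.

Lemma tr_rho_plus : \tr rho_plus = 1.
Proof.
rewrite trace_col_mul_adj big_tidx !big_ord2 !phi_plus_tidx /=.
rewrite normr0 expr0n /= addr0 add0r.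
rewrite ger0_norm ?invr_ge0 ?sqrtC_ge0 ?ler0n // exprVn sqrtCK.
by field.
Qed.

Definition phi_minus_row : 'rV[algC]_4 :=
  delta_mx 0 (tidx 0 0) - delta_mx 0 (tidx 1 1).

Lemma IP_rho_plus_eigenvector :
  phi_minus_row *m IP rho_plus = - 4%:R^-1 *: phi_minus_row.
Proof.
rewrite mulmxBl -!rowE; apply/rowP => j; rewrite -(tidx_split j).
move: (hiA j) (loB j) => a b {j}.
have s_conj : ((sqrtC 2%:R)^-1)^* = (sqrtC 2%:R)^-1 :> algC.
  by rewrite geC0_conj ?invr_ge0 ?sqrtC_ge0 ?ler0n.
have s_sq : (sqrtC 2%:R)^-1 * (sqrtC 2%:R)^-1 = 2%:R^-1 :> algC.
  by rewrite -invfM -expr2 sqrtCK.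
do ! rewrite ?hiA_tidx ?loB_tidx ?phi_plus_tidx ?mxE ?big_ord1 ?eq_tidx /=.
case: a => [[|[|//]] ?]; case: b => [[|[|//]] ?];
  by rewrite /= ?s_conj ?rmorph0 ?mul0r ?mulr0 ?addr0 ?add0r ?s_sq; field.
Qed.

Theorem proposition1 :
  (* every eigenvalue of (I ⊗ P)(σ) is >= -1/4 for every density matrix σ *)
  (forall S : 'M[algC]_4, density_matrix S ->
     forall a : algC, eigenvalue (IP S) a -> - (4%:R)^-1 <= a)
  /\
  (* the value -1/4 is attained at the maximally entangled state *)
  (density_matrix rho_plus /\ eigenvalue (IP rho_plus) (- (4%:R)^-1)).
Proof.
split=> [S S_density a|]; first exact: IP_eigenvalue_ge.
split; first exact: rank1_density tr_rho_plus.
apply/eigenvalueP; exists phi_minus_row; first exact: IP_rho_plus_eigenvector.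
apply/eqP => /rowP /(_ (tidx 0 0)); rewrite !mxE !eqxx eq_tidx /=.
by move/eqP; rewrite subr_eq0 oner_eq0.
Qed.
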